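(* In the general weighted-SGD framework of the context, specialized to the two-arm linear regression model, with weights of the form $w_t=\varphi\big(\mathbb{P}(A_t\mid X_t,\theta_{t-1})\big)$ and under Assumptions (A1)–(A5), the vanilla choice $\varphi\equiv1$ has the optimal asymptotic covariance matrix: $\Sigma_{\mathrm{vnl}}\preceq\tilde\Sigma$, where $\Sigma_{\mathrm{vnl}}=H^{-1}SH^{-1}$ is the asymptotic covariance matrix for $\varphi\equiv1$ and $\tilde\Sigma=H^{-1}SH^{-1}$ is the asymptotic covariance matrix under any other weighting function $\varphi$ (with $H,S$ computed for the respective weights).
   Context: Framework: finite action set $\mathcal{A}$; $\{X_t,Y_t(a):a\in\mathcal{A}\}$ i.i.d. from $\mathcal{P}$; $A_t\sim\pi(X_t,\theta_{t-1})$, $Y_t=Y_t(A_t)$, $\zeta_t=(X_t,A_t,Y_t)$. Two-arm linear regression model: $\mathcal{A}=\{0,1\}$, $\theta\in\mathbb{R}^{2p}$ with blocks $\theta_{[1:p]}$, $\theta_{[p+1:2p]}$ (subvectors of coordinates), $Y_t=(1-A_t)X_t^\top\theta^*_{[1:p]}+A_tX_t^\top\theta^*_{[p+1:2p]}+\mathcal{E}_t$, $\mathcal{E}_t$ i.i.d. mean zero, variance $\sigma^2$, $\theta^*_{[1:p]}\ne\theta^*_{[p+1:2p]}$; loss $\ell(\theta;\zeta_t)=\tfrac12(1-A_t)(Y_t-X_t^\top\theta_{[1:p]})^2+\tfrac12A_t(Y_t-X_t^\top\theta_{[p+1:2p]})^2$. Weighted SGD $\theta_t=\theta_{t-1}-\eta_tw_t\nabla\ell(\theta_{t-1};\zeta_t)$,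 $\eta_t=\eta_0t^{-\alpha}$, $\alpha\in(1/2,1)$, $\bar\theta_t=t^{-1}\sum_{s=0}^{t-1}\theta_s$. With $w(\theta';X,A)=\varphi(\mathbb{P}_{\pi(X,\theta')}(A))$, define $\mathcal{L}_{\theta'}(\theta)=\mathbb{E}_{\mathcal{P}}[\mathbb{E}_{A\sim\pi(X,\theta')}(w(\theta';X,A)\ell(\theta;X,A,Y)\mid X)]$, $\xi_{\theta'}(\theta;\zeta)=w(\theta';X,A)\nabla\ell(\theta;\zeta)-\nabla\mathcal{L}_{\theta'}(\theta)$, $H=\nabla^2\mathcal{L}_{\theta^*}(\theta^* )$, $S=\mathbb{E}[\xi_{\theta^*}(\theta^*;\zeta)\xi_{\theta^*}(\theta^*;\zeta)^\top]$, and $\Delta(X,\theta)=d_{TV}(\pi(X,\theta),\pi(X,\theta^* ))$. (A1) $0<\underline w<w_t<\overline w$ for all $t$. (A2) $\mathcal{L}_{\theta'}(\theta)$ convex and continuously differentiable in $\theta$, twice continuously differentiable at $\theta^*$; $\exists\delta,\lambda>0$: $\langle\nabla\mathcal{L}_\theta(\theta),\theta-\theta^*\rangle>0$ for $\theta\ne\theta^*$ and $\ge\lambda\|\theta-\theta^*\|^2$ for $\|\theta-\theta^*\|\le\delta$. (A3) $\nabla^2\mathcal{L}_{\theta'}(\theta)$ exists everywhere, $H\succ0$, and $\|\nabla^2\mathcal{L}_{\theta'}(\theta)-H\|\le K\|\theta-\theta^*\|+K\|\theta'-\theta^*\|$ when $\|\theta-\theta^*\|+\|\theta'-\theta^*\|\le2\delta$.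 (A4) $\mathbb{E}(\|\nabla\ell(\theta;\zeta)\|^2\mid X,A)\le\phi(X)(1+\|\theta-\theta^*\|^2)$ with $\mathbb{E}\phi(X)=\kappa>0$, and $S$ exists. (A5) $\lim_{\theta\to\theta^*}\mathbb{E}[\Delta(X,\theta)\phi(X)]=0$, $\lim_{\theta\to\theta^*}\mathbb{E}[\|\nabla\ell(\theta;\zeta)-\nabla\ell(\theta^*;\zeta)\|^2\mid X,A]=0$, $\lim_{\theta\to\theta^*}\mathbb{E}_X[|w(\theta;X,A)-w(\theta^*;X,A)|^2\phi(X)\mid A]=0$. For symmetric matrices, $\Sigma\preceq\tilde\Sigma$ means $\tilde\Sigma-\Sigma$ is positive semidefinite. *)

From HB Require Import structures.
From mathcomp Require Import all_boot all_order all_algebra.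
From mathcomp Require Import all_classical all_reals all_analysis.
Set Implicit Arguments. Unset Strict Implicit. Unset Printing Implicit Defensive.
Import Order.TTheory GRing.Theory Num.Theory.
Import numFieldNormedType.Exports.
Local Open Scope classical_set_scope.
Local Open Scope ring_scope.

Section TwoArm.
Context {R : realType} {p : nat}.
Context {d : measure_display} {T : measurableType d}.
(* mu : law of the covariate source; X t : covariate vector in R^p *)
Context (mu : probability T R) (X : T -> 'cV[R]_p).
(* nu : law of the noise E_t (independent of X_t) *)
Context (nu : probability R R).
(* true parameter thetas = (thetas_[1:p] ; thetas_[p+1:2p]) *)
Context (thetas : 'cV[R]_(p + p)).
(* two-arm policy: pi1 x th = P_{pi(x,th)}(A = 1) *)
Context (pi1 : 'cV[R]_p -> 'cV[R]_(p + p) -> R).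

Definition dotv n (u v : 'cV[R]_n) : R := (u^T *m v) 0 0.
Definition enorm n (v : 'cV[R]_n) : R := Num.sqrt (dotv v v).
Definition fnorm m n (M : 'M[R]_(m, n)) : R :=
  Num.sqrt (\sum_i \sum_j M i j ^+ 2).
Definition loewner_le n (A B : 'M[R]_n) : Prop :=
  forall v : 'cV[R]_n, dotv v (A *m v) <= dotv v (B *m v).
Definition posdef n (A : 'M[R]_n) : Prop :=
  forall v : 'cV[R]_n, v != 0 -> 0 < dotv v (A *m v).
Definition convex_fun n (f : 'cV[R]_n -> R) : Prop :=
  forall (x y : 'cV[R]_n) (t : R), 0 <= t <= 1 ->
    f (t *: x + (1 - t) *: y) <= t * f x + (1 - t) * f y.

Definition grad n (f : 'cV[R]_n -> R) (th : 'cV[R]_n) : 'cV[R]_n :=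
  \col_i derive f th (delta_mx i 0).
Definition hess n (f : 'cV[R]_n -> R) (th : 'cV[R]_n) : 'M[R]_n :=
  \matrix_(i, j) derive (fun u => derive f u (delta_mx i 0)) th (delta_mx j 0).

(* actions are booleans: true = arm 1, false = arm 0 *)
Definition actR (a : bool) : R := if a then 1 else 0.
Definition probA (x : 'cV[R]_p) (th : 'cV[R]_(p + p)) (a : bool) : R :=
  if a then pi1 x th else 1 - pi1 x th.
Definition DeltaTV (x : 'cV[R]_p) (th : 'cV[R]_(p + p)) : R :=
  2^-1 * \sum_(a : bool) `|probA x th a - probA x thetas a|.

Definition lin (x : 'cV[R]_p) (b : 'cV[R]_p) : R := (x^T *m b) 0 0.
Definition Yobs (x : 'cV[R]_p) (a : bool) (e : R) : R :=
  (1 - actR a) * lin x (usubmx thetas) + actR a * lin x (dsubmx thetas) + e.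
Definition loss (th : 'cV[R]_(p + p)) (x : 'cV[R]_p) (a : bool) (y : R) : R :=
  2^-1 * (1 - actR a) * (y - lin x (usubmx th)) ^+ 2
  + 2^-1 * actR a * (y - lin x (dsubmx th)) ^+ 2.
Definition gradloss (th : 'cV[R]_(p + p)) (x : 'cV[R]_p) (a : bool) (y : R)
  : 'cV[R]_(p + p) := grad (fun u => loss u x a y) th.

Definition Ex (f : T * R -> R) : R :=
  fine (\int[(mu \x nu)%E]_z (f z)%:E)%E.
Definition ExX (f : T -> R) : R := fine (\int[mu]_t (f t)%:E)%E.

Section Weight.
Variable phi : R -> R.
Definition wgt (th' : 'cV[R]_(p + p)) (x : 'cV[R]_p) (a : bool) : R :=
  phi (probA x th' a).
Definition Lfun (th' th : 'cV[R]_(p + p)) : R :=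
  Ex (fun z => \sum_(a : bool)
        probA (X z.1) th' a * (wgt th' (X z.1) a * loss th (X z.1) a (Yobs (X z.1) a z.2))).
Definition xi (th' th : 'cV[R]_(p + p)) (x : 'cV[R]_p) (a : bool) (y : R)
  : 'cV[R]_(p + p) :=
  wgt th' x a *: gradloss th x a y - grad (Lfun th') th.
Definition Hmat : 'M[R]_(p + p) := hess (Lfun thetas) thetas.
Definition Sint (i j : 'I_(p + p)) (z : T * R) (a : bool) : R :=
  let x := X z.1 in let v := xi thetas thetas x a (Yobs x a z.2) in
  (v *m v^T) i j.
Definition Smat : 'M[R]_(p + p) :=
  \matrix_(i, j) Ex (fun z => \sum_(a : bool) probA (X z.1) thetas a * Sint i j z a).
Definition Sigma : 'M[R]_(p + p) := invmx Hmat *m Smat *m invmx Hmat.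

Definition assumptions : Prop :=
  (exists wl wh : R, 0 < wl /\ forall t th a, 0 < probA (X t) th a ->
      wl < wgt th (X t) a < wh) /\
  (* L_{th'}(th) is a well-defined (finite) expectation *)
  (forall th' th, (mu \x nu)%E.-integrable setT (fun z => (\sum_(a : bool)
        probA (X z.1) th' a * (wgt th' (X z.1) a *
           loss th (X z.1) a (Yobs (X z.1) a z.2)))%:E)) /\
  (* (A2) and (A3) with a common delta *)
  (forall th', convex_fun (Lfun th')
     /\ (forall th, differentiable (Lfun th') th)
     /\ continuous (grad (Lfun th'))
     /\ (forall th, differentiable (grad (Lfun th')) th)
     /\ {for thetas, continuous (hess (Lfun th'))}) /\
  (exists delta lam : R, 0 < delta /\ 0 < lam /\
     (forall th, th != thetas -> 0 < dotv (grad (Lfun th) th) (th - thetas)) /\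
     (forall th, enorm (th - thetas) <= delta ->
        lam * enorm (th - thetas) ^+ 2 <= dotv (grad (Lfun th) th) (th - thetas)) /\
     posdef Hmat /\
     (exists K : R, forall th th',
        enorm (th - thetas) + enorm (th' - thetas) <= 2 * delta ->
        fnorm (hess (Lfun th') th - Hmat)
          <= K * enorm (th - thetas) + K * enorm (th' - thetas))) /\
  (* (A4) and (A5), sharing the function phi4 (written phi(X) in the paper) *)
  (exists (phi4 : 'cV[R]_p -> R) (kappa : R),
     mu.-integrable setT (fun t => (phi4 (X t))%:E) /\
     ExX (fun t => phi4 (X t)) = kappa /\ 0 < kappa /\
     (forall th t a,
        (\int[nu]_e (enorm (gradloss th (X t) a (Yobs (X t) a e)) ^+ 2)%:E
          <= (phi4 (X t) * (1 + enorm (th - thetas) ^+ 2))%:E)%E) /\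
     (* (A4): S exists *)
     (forall i j, (mu \x nu)%E.-integrable setT
        (fun z => (\sum_(a : bool) probA (X z.1) thetas a * `|Sint i j z a|)%:E)) /\
     (ExX (fun t => DeltaTV (X t) th * phi4 (X t)) @[th --> thetas] --> 0) /\
     (forall t a,
        fine (\int[nu]_e (enorm (gradloss th (X t) a (Yobs (X t) a e)
                 - gradloss thetas (X t) a (Yobs (X t) a e)) ^+ 2)%:E)%E
          @[th --> thetas] --> 0) /\
     (forall a,
        ExX (fun t => `|wgt th (X t) a - wgt thetas (X t) a| ^+ 2 * phi4 (X t))
          @[th --> thetas] --> 0)).
End Weight.

Definition model_assumptions (sigma : R) : Prop :=
  (forall i : 'I_p, measurable_fun setT (fun t => X t i 0)) /\
  nu.-integrable setT (fun e => (e ^+ 2)%:E) /\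
  (\int[nu]_e e%:E = 0)%E /\
  (\int[nu]_e (e ^+ 2)%:E = (sigma ^+ 2)%:E)%E /\
  usubmx thetas != dsubmx thetas /\
  (forall x th, 0 <= pi1 x th <= 1).

End TwoArm.

(* With b_a the feature vector of arm a, the loss is (y - <b_a, theta>)^2 / 2, so
   L_{theta*} is quadratic: with w_a = phi(pi(a)), its Hessian is
   H_phi = E[sum_a pi(a) w_a b_a b_a^T], its gradient vanishes at theta*, and
   xi = -eps w_a b_a gives S_phi = sigma^2 N_phi with N_phi = E[sum_a pi(a) w_a^2 b_a b_a^T].
   For phi = 1, N_1 = H_1 and Sigma_vnl = sigma^2 H_1^-1.  Integrating
   sum_a pi(a) (w_a <b_a, u> - <b_a, w>)^2 >= 0 gives
   2 w^T H_phi u <= u^T N_phi u + w^T H_1 w, and the choice u = H_phi^-1 v,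
   w = H_1^-1 v turns this into v^T H_1^-1 v <= v^T H_phi^-1 N_phi H_phi^-1 v. *)

From Pilot Require Import Defs.
From HB Require Import structures.
From mathcomp Require Import all_boot all_order all_algebra.
From mathcomp Require Import all_classical all_reals all_analysis.
From mathcomp Require Import ring lra measurable_realfun.
Import Order.TTheory GRing.Theory Num.Theory.
Import numFieldNormedType.Exports.
Local Open Scope classical_set_scope.
Local Open Scope ring_scope.

Lemma derive_quadratic (R : realType) (V : normedModType R) (f : V -> R)
    (a v : V) (A B C : R) :
  (forall h : R, f (a + h *: v) = A + h * B + h ^+ 2 * C) -> derive f a v = B.
Proof.
move=> fE; have fa : f a = A by have := fE 0; rewrite scale0r addr0 => ->; ring.
apply: cvg_lim => //; apply: (@cvg_trans _ ((fun h : R => B + h * C) @ 0^')).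
  apply: near_eq_cvg; near=> h.
  have h0 : h != 0 by near: h; exact: nbhs_dnbhs_neq.
  by rewrite /= [h *: v + a]addrC fE fa /GRing.scale /=; field.
apply: cvg_within_filter.
have cB : (fun=> B) @ nbhs (0 : R) --> B by exact: cvg_cst.
have cC : (fun=> C) @ nbhs (0 : R) --> C by exact: cvg_cst.
by have := cvgD cB (cvgM (@cvg_id _ (nbhs (0 : R))) cC); rewrite mul0r addr0; apply.
Unshelve. all: by end_near.
Qed.

Notation Rintegrable m f := (m.-integrable setT (EFin \o f)).

Definition mx_Rintegral {R : realType} {d : measure_display} {U : measurableType d}
  (m : {measure set U -> \bar R}) {k l} (M : U -> 'M[R]_(k, l)) : 'M[R]_(k, l) :=
  \matrix_(i, j) \int[m]_t M t i j.

Section real_integrable.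
Context {R : realType} {d : measure_display} {U : measurableType d}.
Context {m : {measure set U -> \bar R}}.
Implicit Types (f g : U -> R).

Lemma eq_Rintegrable {f g} : Rintegrable m f -> f =1 g -> Rintegrable m g.
Proof. by move=> + fg; apply: eq_integrable => // z _ /=; rewrite fg. Qed.

Lemma RintegrableD {f g} : Rintegrable m f -> Rintegrable m g ->
  Rintegrable m (fun z => f z + g z).
Proof.
by move=> mf mg; apply: eq_integrable (integrableD measurableT mf mg).
Qed.

Lemma RintegrableZl k {f} : Rintegrable m f -> Rintegrable m (fun z => k * f z).
Proof.
by move=> mf; apply: eq_integrable (integrableZl measurableT k mf).
Qed.

Lemma RintegrableB {f g} : Rintegrable m f -> Rintegrable m g ->
  Rintegrable m (fun z => f z - g z).
Proof.
by move=> mf mg; apply: eq_integrable (integrableB measurableT mf mg).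
Qed.

Lemma Rintegrable_sum {I : Type} (s : seq I) {f : I -> U -> R} :
  (forall i, Rintegrable m (f i)) -> Rintegrable m (fun z => \sum_(i <- s) f i z).
Proof.
move=> mf; have := @integrable_sum _ _ _ m _ measurableT _ s xpredT (fun i => EFin \o f i).
by move=> /(_ (fun i _ => mf i)); apply: eq_integrable => // z _; rewrite /= sumEFin.
Qed.

Lemma Rintegral_sum {I : Type} (s : seq I) {f : I -> U -> R} :
  (forall i, Rintegrable m (f i)) ->
  \int[m]_z (\sum_(i <- s) f i z) = \sum_(i <- s) \int[m]_z f i z.
Proof.
move=> mf; apply: EFin_inj; rewrite EFin_sum_fine => [|i _]; last first.
  exact: integrable_fin_num (mf i).
rewrite /Rintegral fineK; last first.
  by apply: integrable_fin_num => //; exact: Rintegrable_sum.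
under eq_integral do rewrite -sumEFin.
exact: integral_sum.
Qed.

(* A, B and C are linear combinations of F 0, F 1 and F (-1). *)
Lemma Rintegral_quadratic (F : R -> U -> R) (A B C : U -> R) :
  (forall h, Rintegrable m (F h)) ->
  (forall h z, F h z = A z + h * B z + h ^+ 2 * C z) ->
  [/\ Rintegrable m A, Rintegrable m B, Rintegrable m C &
   forall h, \int[m]_z F h z = \int[m]_z A z + h * \int[m]_z B z + h ^+ 2 * \int[m]_z C z].
Proof.
move=> mF FE.
have mA : Rintegrable m A by apply: (eq_Rintegrable (mF 0)) => z; rewrite FE; ring.
have mB : Rintegrable m B.
  apply: (eq_Rintegrable (RintegrableZl (2^-1) (RintegrableB (mF 1) (mF (-1))))).
  by move=> z; rewrite !FE; field.
have mC : Rintegrable m C.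
  apply: (eq_Rintegrable
    (RintegrableB (RintegrableZl (2^-1) (RintegrableD (mF 1) (mF (-1)))) mA)).
  by move=> z; rewrite !FE; field.
split=> // h; rewrite (eq_Rintegral _ (fun z _ => FE h z)).
rewrite !RintegralD ?RintegralZl //; last first.
- exact: RintegrableZl.
- exact: RintegrableD (RintegrableZl _ mB).
- exact: RintegrableZl.
Qed.

Lemma derive_Rintegral_quadratic {V : normedModType R} (F : V -> U -> R)
    {a v : V} {B : U -> R} (C : U -> R) :
  (forall h, Rintegrable m (F (a + h *: v))) ->
  (forall h z, F (a + h *: v) z = F a z + h * B z + h ^+ 2 * C z) ->
  Rintegrable m B /\ derive (fun th => \int[m]_z F th z) a v = \int[m]_z B z.
Proof.
move=> mF FE; have [_ mB _ intE] := Rintegral_quadratic (fun h => F (a + h *: v)) _ _ _ mF FE.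
by split=> //; apply: derive_quadratic => h; apply: intE.
Qed.

Lemma dotv_mx_Rintegral {n : nat} {M : U -> 'M[R]_n} (x y : 'cV[R]_n) :
  (forall i j, Rintegrable m (fun t => M t i j)) ->
  Rintegrable m (fun t => dotv x (M t *m y)) /\
  dotv x (mx_Rintegral m M *m y) = \int[m]_t dotv x (M t *m y).
Proof.
move=> mM.
have dotvE (N : 'M[R]_n) : dotv x (N *m y) = \sum_i \sum_j x i 0 * (N i j * y j 0).
  by rewrite /dotv !mxE; apply: eq_bigr => i _; rewrite !mxE mulr_sumr.
have mMy i j : Rintegrable m (fun t => M t i j * y j 0).
  by apply: (eq_Rintegrable (RintegrableZl (y j 0) (mM i j))) => t; rewrite mulrC.
have mxMy i j : Rintegrable m (fun t => x i 0 * (M t i j * y j 0)).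
  exact: RintegrableZl.
have mxMyi i : Rintegrable m (fun t => \sum_j x i 0 * (M t i j * y j 0)).
  exact: Rintegrable_sum.
split; first by apply: (eq_Rintegrable (Rintegrable_sum _ mxMyi)) => t; rewrite dotvE.
rewrite dotvE (eq_Rintegral _ (fun t _ => dotvE (M t))) Rintegral_sum //.
apply: eq_bigr => i _; rewrite Rintegral_sum //; apply: eq_bigr => j _.
by rewrite mxE RintegralZl // RintegralZr.
Qed.

End real_integrable.

Lemma integrable_id_of_sqr {R : realType} {nu : {finite_measure set R -> \bar R}} :
  nu.-integrable setT (fun e => (e ^+ 2)%:E) -> nu.-integrable setT (fun e => e%:E).
Proof.
move=> nu_e2; apply: (@le_integrable _ _ _ nu _ measurableT _ (fun e => (1 + e ^+ 2)%:E)).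
- exact/measurable_EFinP.
- move=> e _ /=; rewrite lee_fin [`|1 + _|]ger0_norm ?addr_ge0 ?sqr_ge0 //.
  by case: (lerP 0 e) => e0; [rewrite ger0_norm | rewrite ltr0_norm]; nra.
- exact: (integrableD measurableT (finite_measure_integrable_cst nu 1 measurableT) nu_e2).
Qed.

Section covariate_noise_product.
Context {R : realType} {d : measure_display} {T : measurableType d}.
Context {mu : probability T R} {nu : probability R R}.
Local Notation P := (mu \x nu)%E.

Lemma Rintegral_fst {K : T -> R} : Rintegrable P (fun z => K z.1) ->
  Rintegrable mu K /\ \int[P]_z K z.1 = \int[mu]_t K t.
Proof.
move=> PK; have mK1 := measurable_int _ PK; move/measurable_EFinP in mK1.
have mK : measurable_fun setT K.
  apply: eq_measurable_fun (measurableT_comp mK1 (measurable_fun_pair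
    (@measurable_id _ _ setT) (measurable_cst (0 : R)))) => t _ //.
have section_cst (g : T -> \bar R) t :
  fubini_F nu (fun z : T * R => g z.1) t = g t.
  by rewrite /fubini_F /= integral_cst //= probability_setT mule1.
split.
  apply/integrableP; split; first exact/measurable_EFinP.
  move/integrableP: PK => [_]; rewrite (fubini_tonelli1 (fun z => `|(K z.1)%:E|)%E) //.
    by under eq_integral do rewrite (section_cst (fun t => `|(K t)%:E|%E)).
  by apply/measurable_EFinP; apply: measurableT_comp.
rewrite /Rintegral -(integral12_prod_meas1 PK); congr fine.
by apply: eq_integral => t _; rewrite (section_cst (EFin \o K)).
Qed.

Lemma Rintegral_noise_mul (g : T -> R) :
  nu.-integrable setT (fun e => e%:E) -> (\int[nu]_e e%:E = 0)%E ->
  Rintegrable P (fun z => z.2 * g z.1) -> \int[P]_z (z.2 * g z.1) = 0.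
Proof.
move=> nu_e nu_e0 Pg; rewrite /Rintegral -(integral12_prod_meas1 Pg).
rewrite (eq_integral (fun _ => 0%E)) ?integral0 // => t _.
rewrite /fubini_F /=; under eq_integral do rewrite EFinM.
by rewrite integralZr // nu_e0 mul0e.
Qed.

Lemma Rintegral_noise_sqr_mul {D : T -> R} {s2 : R} : measurable_fun setT D ->
  nu.-integrable setT (fun e => (e ^+ 2)%:E) -> (\int[nu]_e (e ^+ 2)%:E = s2%:E)%E ->
  Rintegrable P (fun z => z.2 ^+ 2 * D z.1) ->
  \int[P]_z (z.2 ^+ 2 * D z.1) = s2 * \int[mu]_t D t /\ (s2 != 0 -> Rintegrable mu D).
Proof.
move=> mD nu_e2 nu_e2E PD.
have s2_ge0 : 0 <= s2.
  by rewrite -lee_fin -nu_e2E integral_ge0 // => e _; rewrite lee_fin sqr_ge0.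
have section_sqr (g : T -> R) t :
  fubini_F nu (fun z : T * R => (z.2 ^+ 2 * g z.1)%:E) t = (s2 * g t)%:E.
  rewrite /fubini_F /=; under eq_integral do rewrite EFinM.
  by rewrite integralZr // nu_e2E.
have muD : s2 != 0 -> Rintegrable mu D.
  move=> s2_neq0; apply/integrableP; split; first exact/measurable_EFinP.
  move/integrableP: PD => [_].
  rewrite (fubini_tonelli1 (fun z : T * R => `|(z.2 ^+ 2 * D z.1)%:E|)%E) //=; last first.
    apply/measurable_EFinP; apply: measurableT_comp => //.
    by apply: measurable_funM; [exact: measurable_funX | exact: measurableT_comp].
  rewrite (eq_integral (fun t => s2%:E * `|D t|%:E)%E) => [|t _]; last first.
    rewrite -EFinM -(section_sqr (fun t => `|D t|)) /fubini_F /=.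
    by apply: eq_integral => e _; rewrite normrM ger0_norm ?sqr_ge0.
  rewrite ge0_integralZl_EFin //; last exact/measurable_EFinP/measurableT_comp.
  have s2_gt0 : 0 < s2 by rewrite lt_def s2_neq0.
  have [->|Dfin _] := eqVneq (\int[mu]_t `|D t|%:E)%E +oo%E.
    by rewrite gt0_muley ?lte_fin // ltxx.
  by rewrite lt_neqAle Dfin leey.
split=> //; rewrite /Rintegral -(integral12_prod_meas1 PD).
rewrite [X in fine X = _](eq_integral (fun t => (s2 * D t)%:E)%E) => [|t _]; last first.
  exact: section_sqr.
have [->|/muD muD'] := eqVneq s2 0.
  by rewrite mul0r (eq_integral (fun _ => 0%E)) ?integral0 // => t _; rewrite mul0r.
exact: RintegralZl.
Qed.

End covariate_noise_product.

Section dotv_theory.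
Context {R : realType} {n : nat}.
Implicit Types (u v w : 'cV[R]_n) (A B : 'M[R]_n).

Lemma dotvE u v : dotv u v = \sum_i u i 0 * v i 0.
Proof. by rewrite /dotv mxE; apply: eq_bigr => i _; rewrite mxE. Qed.

Lemma dotvC u v : dotv u v = dotv v u.
Proof. by rewrite !dotvE; apply: eq_bigr => i _; rewrite mulrC. Qed.

Lemma dotvDr u v w : dotv u (v + w) = dotv u v + dotv u w.
Proof. by rewrite /dotv mulmxDr mxE. Qed.

Lemma dotvZr u v c : dotv u (c *: v) = c * dotv u v.
Proof. by rewrite /dotv -scalemxAr mxE. Qed.

Lemma dotv_delta u i : dotv u (delta_mx i 0) = u i 0.
Proof.
rewrite dotvE (bigD1 i) //= big1 => [|j ji]; rewrite !mxE ?eqxx ?mulr1 ?addr0 //.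
by rewrite (negbTE ji) mulr0.
Qed.

Lemma dotv_mulmx u v A : dotv u (A *m v) = dotv (A^T *m u) v.
Proof. by rewrite /dotv trmx_mul trmxK mulmxA. Qed.

Lemma dotv_outer (I : Type) (s : seq I) (c : I -> R) (b : I -> 'cV[R]_n) u v :
  dotv u ((\sum_(a <- s) c a *: (b a *m (b a)^T)) *m v) =
  \sum_(a <- s) c a * (dotv (b a) u * dotv (b a) v).
Proof.
rewrite mulmx_suml /dotv mulmx_sumr summxE; apply: eq_bigr => a _.
rewrite -scalemxAl -scalemxAr mxE; congr (_ * _).
rewrite !mulmxA -(mulmxA _ _ v) mxE big_ord1.
by rewrite -[u^T *m b a]trmxK trmx_mul trmxK [in X in X * _]mxE.
Qed.

Lemma posdef_unitmx A : posdef A -> A \in unitmx.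
Proof.
move=> A_pd; rewrite unitmxE unitfE; apply/negP => /det0P [v v0 vA].
have vT0 : v^T != 0 by apply: contra v0 => /eqP vT0; rewrite -[v]trmxK vT0 trmx0.
by have := A_pd _ vT0; rewrite /dotv trmxK mulmxA vA mul0mx mxE ltxx.
Qed.

(* With u = B^-1 v and w = A^-1 v the hypothesis reads
   2 v^T A^-1 v <= u^T N u + v^T A^-1 v. *)
Lemma loewner_le_invmx A B N : A \in unitmx -> B \in unitmx -> B^T = B ->
  (forall u w, 2 * dotv w (B *m u) <= dotv u (N *m u) + dotv w (A *m w)) ->
  loewner_le (invmx A) (invmx B *m N *m invmx B).
Proof.
move=> A_unit B_unit B_sym le_quad v.
rewrite -!mulmxA [in X in _ <= X]dotv_mulmx trmx_inv B_sym.
have := le_quad (invmx B *m v) (invmx A *m v).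
rewrite !mulKVmx // [dotv (invmx A *m v) v]dotvC.
lra.
Qed.

Lemma loewner_le_scale s A B : 0 <= s -> (s != 0 -> loewner_le A B) ->
  loewner_le (s *: A) (s *: B).
Proof.
move=> s_ge0 leAB v; rewrite -!scalemxAl !dotvZr.
have [->|/leAB/(_ v) le_v] := eqVneq s 0; first by rewrite !mul0r.
exact: ler_wpM2l.
Qed.

Lemma loewner_le_sandwich A B N s :
  A \in unitmx -> B \in unitmx -> B^T = B -> 0 <= s ->
  (s != 0 -> forall u w, 2 * dotv w (B *m u) <= dotv u (N *m u) + dotv w (A *m w)) ->
  loewner_le (invmx A *m (s *: A) *m invmx A) (invmx B *m (s *: N) *m invmx B).
Proof.
move=> A_unit B_unit B_sym s_ge0 le_quad.
rewrite -!scalemxAr -!scalemxAl mulVmx // mul1mx.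
apply: loewner_le_scale => // /le_quad; exact: loewner_le_invmx.
Qed.

End dotv_theory.

Section feature_map.
Context {R : realType} {p : nat}.
Implicit Types (x : 'cV[R]_p) (th : 'cV[R]_(p + p)) (a : bool).

Definition feat x a : 'cV[R]_(p + p) := col_mx ((1 - actR a) *: x) (actR a *: x).

Lemma dotv_feat x a th :
  dotv (feat x a) th = (1 - actR a) * lin x (usubmx th) + actR a * lin x (dsubmx th).
Proof.
rewrite /dotv /feat -[th in LHS]vsubmxK tr_col_mx mul_row_col !linearZ /=.
by rewrite -!scalemxAl mxE [X in X + _]mxE [X in _ + X]mxE.
Qed.

Lemma lossE th x a y : loss th x a y = 2^-1 * (y - dotv (feat x a) th) ^+ 2.
Proof. by rewrite /loss dotv_feat; case: a => /=; ring. Qed.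

Lemma YobsE th x a e : Yobs th x a e = dotv (feat x a) th + e.
Proof. by rewrite /Yobs dotv_feat. Qed.

Lemma gradloss_Yobs th x a e : gradloss th x a (Yobs th x a e) = - e *: feat x a.
Proof.
apply/matrixP => i j; rewrite (ord1 j) /gradloss /grad [LHS]mxE [RHS]mxE.
apply: (@derive_quadratic _ _ _ _ _ (2^-1 * e ^+ 2) _ (2^-1 * feat x a i 0 ^+ 2)) => h.
by rewrite lossE YobsE dotvDr dotvZr dotv_delta; field.
Qed.

Lemma feat_entry x a i : feat x a i 0 = feat (const_mx 1) a i 0 * col_mx x x i 0.
Proof.
rewrite /feat -(splitK i).
by case: (fintype.split i) => k /=; rewrite ?col_mxEu ?col_mxEd !mxE mulr1.
Qed.

Lemma feat1_ge0 a i : 0 <= feat (const_mx 1) a i 0.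
Proof.
rewrite /feat -(splitK i).
by case: (fintype.split i) => k /=; rewrite ?col_mxEu ?col_mxEd !mxE mulr1;
  case: a; rewrite /= ?subrr ?subr0.
Qed.

End feature_map.

Section two_arm_model.
Context {R : realType} {p : nat} {d : measure_display} {T : measurableType d}.
Context {mu : probability T R} {X : T -> 'cV[R]_p} {nu : probability R R}.
Context {thetas : 'cV[R]_(p + p)} { pi1 : 'cV[R]_p -> 'cV[R]_(p + p) -> R }.
Local Notation P := (mu \x nu)%E.
Local Notation probA := (probA pi1).
Local Notation wgt := (wgt pi1).
Local Notation Lfun := (Defs.Lfun mu X nu thetas pi1).
Local Notation Hmat := (Hmat mu X nu thetas pi1).

(* Conditional moments sum_a pi(a) w_a^k b_a b_a^T of the feature vectors b_a;
   the paper's H and S / sigma^2 are their expectations for k = 1 and k = 2. *)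
Definition wmoment (phi : R -> R) (k : nat) (t : T) : 'M[R]_(p + p) :=
  \sum_(a : bool) (probA (X t) thetas a * wgt phi thetas (X t) a ^+ k) *:
    (feat (X t) a *m (feat (X t) a)^T).

Lemma wmomentE phi k t i j : wmoment phi k t i j =
  \sum_(a : bool) probA (X t) thetas a * wgt phi thetas (X t) a ^+ k *
    (feat (X t) a i 0 * feat (X t) a j 0).
Proof.
rewrite summxE; apply: eq_bigr => a _.
by rewrite mxE [(_ *m _) i j]mxE big_ord1 [_^T _ _]mxE.
Qed.

Lemma tr_wmoment phi k t : (wmoment phi k t)^T = wmoment phi k t.
Proof.
apply/matrixP => i j; rewrite mxE !wmomentE.
by apply: eq_bigr => a _; rewrite [feat _ _ j 0 * _]mulrC.
Qed.

Lemma wmoment_cst1 k t : wmoment (fun=> 1) k t = wmoment (fun=> 1) 1 t.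
Proof. by apply: eq_bigr => a _; rewrite /Defs.wgt !expr1n. Qed.

Lemma mx_Rintegral_wmoment_cst1 k :
  mx_Rintegral mu (wmoment (fun=> 1) k) = mx_Rintegral mu (wmoment (fun=> 1) 1).
Proof. by apply/matrixP => i j; rewrite !mxE; under eq_Rintegral do rewrite wmoment_cst1. Qed.

Definition Lint phi th (z : T * R) : R :=
  \sum_(a : bool) probA (X z.1) thetas a *
    (wgt phi thetas (X z.1) a * loss th (X z.1) a (Yobs thetas (X z.1) a z.2)).

Definition Lint_deriv phi th i (z : T * R) : R :=
  \sum_(a : bool) probA (X z.1) thetas a * wgt phi thetas (X z.1) a *
    ((dotv (feat (X z.1) a) th - Yobs thetas (X z.1) a z.2) * feat (X z.1) a i 0).

Section integrable_loss.
Context {phi : R -> R}.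
Hypothesis P_Lint : forall th, Rintegrable P (Lint phi th).

Lemma derive_Lfun th i : Rintegrable P (Lint_deriv phi th i) /\
  derive (Lfun phi thetas) th (delta_mx i 0) = \int[P]_z Lint_deriv phi th i z.
Proof.
pose C (z : T * R) := \sum_(a : bool) probA (X z.1) thetas a * wgt phi thetas (X z.1) a *
  (2^-1 * feat (X z.1) a i 0 ^+ 2).
apply: (derive_Rintegral_quadratic (Lint phi) C) => [h|h z].
  exact: P_Lint.
rewrite /Lint /Lint_deriv /C !big_bool /= !lossE !dotvDr !dotvZr !dotv_delta.
by field.
Qed.

Lemma Hmat_entry i j : Rintegrable P (fun z => wmoment phi 1 z.1 i j) /\
  Hmat phi i j = \int[P]_z wmoment phi 1 z.1 i j.
Proof.
rewrite /Defs.Hmat /hess mxE.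
have -> : (fun th => derive (Lfun phi thetas) th (delta_mx i 0)) =
    (fun th => \int[P]_z Lint_deriv phi th i z).
  by apply: funext => th; rewrite (derive_Lfun th i).2.
apply: (derive_Rintegral_quadratic (Lint_deriv phi ^~ i) (fun=> 0)) => [h|h z].
  exact: (derive_Lfun _ i).1.
rewrite /Lint_deriv wmomentE !big_bool /= !dotvDr !dotvZr !dotv_delta expr1.
by ring.
Qed.

Lemma HmatE : Hmat phi = mx_Rintegral mu (wmoment phi 1).
Proof.
apply/matrixP => i j; have [P_H ->] := Hmat_entry i j.
by rewrite mxE (Rintegral_fst (K := fun t => wmoment phi 1 t i j) P_H).2.
Qed.

Lemma Rintegrable_wmoment1 i j : Rintegrable mu (fun t => wmoment phi 1 t i j).
Proof. exact: (Rintegral_fst (K := fun t => wmoment phi 1 t i j) (Hmat_entry i j).1).1. Qed.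

Lemma Hmat_sym : (Hmat phi)^T = Hmat phi.
Proof.
apply/matrixP => i j; rewrite HmatE !mxE.
by apply: eq_Rintegral => t _; rewrite -[in RHS]tr_wmoment mxE.
Qed.

Lemma grad_Lfun_thetas :
  nu.-integrable setT (fun e => e%:E) -> (\int[nu]_e e%:E = 0)%E ->
  grad (Lfun phi thetas) thetas = 0.
Proof.
move=> nu_e nu_e0; apply/matrixP => i j; rewrite (ord1 j) !mxE.
have [P_grad ->] := derive_Lfun thetas i.
pose g t := - \sum_(a : bool) probA (X t) thetas a * wgt phi thetas (X t) a * feat (X t) a i 0.
have gradE : Lint_deriv phi thetas i =1 fun z => z.2 * g z.1.
  by move=> z; rewrite /Lint_deriv /g !big_bool /= !YobsE; ring.
rewrite (eq_Rintegral _ (fun z _ => gradE z)).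
exact: (Rintegral_noise_mul g nu_e nu_e0 (eq_Rintegrable P_grad gradE)).
Qed.

End integrable_loss.

Definition wmoment2_abs phi i j t : R :=
  \sum_(a : bool) probA (X t) thetas a *
    (wgt phi thetas (X t) a ^+ 2 * `|feat (X t) a i 0 * feat (X t) a j 0|).

(* The integrability hypothesis on S only controls [wmoment2_abs]; [wmoment phi 2]
   differs from it by the sign of the covariates, whence its measurability. *)
Lemma wmoment2_sign phi i j t : wmoment phi 2 t i j =
  if 0 <= col_mx (X t) (X t) i 0 * col_mx (X t) (X t) j 0
  then wmoment2_abs phi i j t else - wmoment2_abs phi i j t.
Proof.
have featM_norm a (y z : R) : `|feat (const_mx 1) a i 0 * y * (feat (const_mx 1) a j 0 * z)|
    = feat (const_mx 1) a i 0 * feat (const_mx 1) a j 0 * `|y * z|.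
  by rewrite !normrM !(ger0_norm (feat1_ge0 _ _)); ring.
rewrite wmomentE /wmoment2_abs !big_bool /= ![feat (X t) _ _ 0]feat_entry !featM_norm.
case: ifP => [xx_ge0|/negbT]; first by rewrite ger0_norm //; ring.
by rewrite -ltNge => /ltW/ler0_norm ->; ring.
Qed.

Hypothesis X_meas : forall i : 'I_p, measurable_fun setT (fun t => X t i 0).

Lemma measurable_col_mx_X i : measurable_fun setT (fun t => col_mx (X t) (X t) i 0).
Proof.
by rewrite -(splitK i); case: (fintype.split i) => k /=;
  under eq_fun do rewrite ?col_mxEu ?col_mxEd; exact: X_meas.
Qed.

Hypothesis pi1_01 : forall x th, 0 <= pi1 x th <= 1.

Lemma wmoment_quad_ge0 phi t u w :
  0 <= dotv u (wmoment phi 2 t *m u) - 2 * dotv w (wmoment phi 1 t *m u)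
       + dotv w (wmoment (fun=> 1) 1 t *m w).
Proof.
rewrite !dotv_outer !big_bool /Defs.wgt /= !expr1n !mulr1.
have /andP[q_ge0 q_le1] := pi1_01 (X t) thetas; set q := pi1 _ _ in q_ge0 q_le1 *.
set ut := dotv (feat _ true) u; set uf := dotv (feat _ false) u.
set wt := dotv (feat _ true) w; set wf := dotv (feat _ false) w.
have : 0 <= q * (phi q * ut - wt) ^+ 2 + (1 - q) * (phi (1 - q) * uf - wf) ^+ 2.
  by rewrite addr_ge0 // mulr_ge0 ?subr_ge0 ?sqr_ge0.
by move=> /le_trans; apply; rewrite le_eqVlt; apply/orP; left; apply/eqP; ring.
Qed.

Lemma le_wmoment_quad phi u w :
  (forall i j, Rintegrable mu (fun t => wmoment phi 1 t i j)) ->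
  (forall i j, Rintegrable mu (fun t => wmoment phi 2 t i j)) ->
  (forall i j, Rintegrable mu (fun t => wmoment (fun=> 1) 1 t i j)) ->
  2 * dotv w (mx_Rintegral mu (wmoment phi 1) *m u) <=
  dotv u (mx_Rintegral mu (wmoment phi 2) *m u) +
  dotv w (mx_Rintegral mu (wmoment (fun=> 1) 1) *m w).
Proof.
move=> mu_H mu_N mu_H1.
have [mu_Hwu ->] := dotv_mx_Rintegral w u mu_H.
have [mu_Nuu ->] := dotv_mx_Rintegral u u mu_N.
have [mu_H1ww ->] := dotv_mx_Rintegral w w mu_H1.
rewrite -RintegralZl // -RintegralD //.
apply: le_Rintegral => //; [exact: RintegrableZl | exact: RintegrableD | move=> t _].
by rewrite -subr_ge0 addrAC; exact: wmoment_quad_ge0.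
Qed.

Section noise_covariance.
Context {phi : R -> R} {sigma : R}.
Hypothesis P_Lint : forall th, Rintegrable P (Lint phi th).
Hypothesis nu_e2 : nu.-integrable setT (fun e => (e ^+ 2)%:E).
Hypothesis nu_e0 : (\int[nu]_e e%:E = 0)%E.
Hypothesis nu_var : (\int[nu]_e (e ^+ 2)%:E = (sigma ^+ 2)%:E)%E.
Hypothesis P_Sabs : forall i j, P.-integrable setT (fun z =>
  (\sum_(a : bool) probA (X z.1) thetas a * `|Sint mu X nu thetas pi1 phi i j z a|)%:E).

Lemma Sint_noise i j z a : Sint mu X nu thetas pi1 phi i j z a =
  z.2 ^+ 2 * (wgt phi thetas (X z.1) a ^+ 2 * (feat (X z.1) a i 0 * feat (X z.1) a j 0)).
Proof.
rewrite /Sint /xi (grad_Lfun_thetas P_Lint (integrable_id_of_sqr nu_e2) nu_e0) subr0.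
set b := feat (X z.1) a; rewrite gradloss_Yobs -/b !mxE big_ord1 !mxE.
by change (0 : 'I_1) with (@ord0 0); ring.
Qed.

Lemma Sabs_noise i j z :
  \sum_(a : bool) probA (X z.1) thetas a * `|Sint mu X nu thetas pi1 phi i j z a|
  = z.2 ^+ 2 * wmoment2_abs phi i j z.1.
Proof.
have normE (y v q : R) : `|y ^+ 2 * (v ^+ 2 * q)| = y ^+ 2 * (v ^+ 2 * `|q|).
  by rewrite normrM (normrM (v ^+ 2)) !(ger0_norm (sqr_ge0 _)).
by rewrite /wmoment2_abs !big_bool /= !Sint_noise !normE; ring.
Qed.

Lemma measurable_wmoment2 i j : measurable_fun setT (fun t => wmoment phi 2 t i j).
Proof.
have m_abs : measurable_fun setT (wmoment2_abs phi i j).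
  have /measurable_EFinP m_Sabs := measurable_int _ (P_Sabs i j).
  have := measurableT_comp m_Sabs
    (measurable_fun_pair (@measurable_id _ _ setT) (measurable_cst (1 : R))).
  by apply: eq_measurable_fun => t _ /=; rewrite (Sabs_noise i j (t, 1)) expr1n mul1r.
rewrite (funext (wmoment2_sign phi i j)); apply: measurable_fun_ifT => //.
- apply: measurable_fun_ler; first exact: measurable_cst.
  by apply: measurable_funM; exact: measurable_col_mx_X.
- exact: measurable_funN.
Qed.

Lemma Smat_entry i j :
  Smat mu X nu thetas pi1 phi i j = sigma ^+ 2 * \int[mu]_t wmoment phi 2 t i j /\
  (sigma ^+ 2 != 0 -> Rintegrable mu (fun t => wmoment phi 2 t i j)).
Proof.
have SE z : \sum_(a : bool) probA (X z.1) thetas a * Sint mu X nu thetas pi1 phi i j z a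
    = z.2 ^+ 2 * wmoment phi 2 z.1 i j.
  by rewrite wmomentE !big_bool /= !Sint_noise; ring.
have m_S := measurable_wmoment2 i j.
have P_S : Rintegrable P (fun z => z.2 ^+ 2 * wmoment phi 2 z.1 i j).
  apply: le_integrable (P_Sabs i j) => //.
    apply/measurable_EFinP; apply: measurable_funM; first exact: measurable_funX.
    exact: measurableT_comp m_S _.
  move=> z _ /=; rewrite (Sabs_noise i j z) lee_fin !normrM wmoment2_sign.
  by case: ifP; rewrite ?normrN.
have [<- mu_S] := Rintegral_noise_sqr_mul m_S nu_e2 nu_var P_S.
by split=> //; rewrite mxE; apply: eq_Rintegral => z _; exact: SE.
Qed.

Lemma SmatE : Smat mu X nu thetas pi1 phi = sigma ^+ 2 *: mx_Rintegral mu (wmoment phi 2).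
Proof. by apply/matrixP => i j; rewrite (Smat_entry i j).1 !mxE. Qed.

Lemma Rintegrable_wmoment2 i j : sigma ^+ 2 != 0 ->
  Rintegrable mu (fun t => wmoment phi 2 t i j).
Proof. exact: (Smat_entry i j).2. Qed.

End noise_covariance.

Lemma assumptions_integrable_posdef {phi} : assumptions mu X nu thetas pi1 phi ->
  [/\ forall th, Rintegrable P (Lint phi th), posdef (Hmat phi) &
      forall i j, P.-integrable setT (fun z => (\sum_(a : bool)
        probA (X z.1) thetas a * `|Sint mu X nu thetas pi1 phi i j z a|)%:E)].
Proof.
case=> _ [P_Lint [_ [[_ [_ [_ [_ [_ [_ [pd _]]]]]]] [_ [_ [_ [_ [_ [_ [P_Sabs _]]]]]]]]]].
by split; [exact: P_Lint | exact: pd | exact: P_Sabs].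
Qed.

End two_arm_model.

Theorem corollary1 (R : realType) (p : nat) (d : measure_display) (T : measurableType d)
  (mu : probability T R) (X : T -> 'cV[R]_p) (nu : probability R R) (sigma : R)
  (thetas : 'cV[R]_(p + p)) (pi1 : 'cV[R]_p -> 'cV[R]_(p + p) -> R) (phi : R -> R) :
  model_assumptions X nu thetas pi1 sigma ->
  assumptions mu X nu thetas pi1 (fun _ => 1) ->
  assumptions mu X nu thetas pi1 phi ->
  loewner_le (Sigma mu X nu thetas pi1 (fun _ => 1)) (Sigma mu X nu thetas pi1 phi).
Proof.
move=> [X_meas [nu_e2 [nu_e0 [nu_var [_ pi1_01]]]]] A1 Aphi.
have [L1 H1_pd S1] := assumptions_integrable_posdef A1.
have [L H_pd S] := assumptions_integrable_posdef Aphi.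
rewrite /Sigma (SmatE X_meas L1 nu_e2 nu_e0 nu_var S1) (SmatE X_meas L nu_e2 nu_e0 nu_var S).
rewrite mx_Rintegral_wmoment_cst1 -(HmatE L1).
apply: loewner_le_sandwich; rewrite ?sqr_ge0 ?(Hmat_sym L) ?posdef_unitmx // => sigma_neq0 u w.
rewrite (HmatE L1) (HmatE L).
apply: le_wmoment_quad pi1_01 _ _ _ _ _ _ => i j.
- exact: (Rintegrable_wmoment1 L).
- exact: (Rintegrable_wmoment2 X_meas L nu_e2 nu_e0 nu_var S i j sigma_neq0).
- exact: (Rintegrable_wmoment1 L1).
Qed.
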